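(* Let $A=\mathbb Q[x_1,x_2,\dots]$ be the polynomial algebra graded by $\deg x_n=n$, and let $d:A\to A$ be the derivation with $d x_n=x_{n-1}$ for $n\ge2$ and $d x_1=0$ (so $d$ lowers degree by $1$). Then every element of $A$ of positive degree lies in the image of $d$.
   Context: Equivalently, in terms of $s_n=n!\,x_n$ (the universal power sums in the rational cohomology of the index-zero Fredholm operators), $d s_n=n s_{n-1}$ for $n\ge2$ and $d s_1=0$. *)

From HB Require Import structures.
From mathcomp Require Import all_boot all_order all_algebra.
From mathcomp Require Import multinomials.mpoly.
Set Implicit Arguments. Unset Strict Implicit. Unset Printing Implicit Defensive.
Import GRing.Theory.
Local Open Scope ring_scope.

(* Model of A = Q[x_1, x_2, ...]:  A is the increasing union of the
   finite polynomial rings {mpoly rat[N]}, where the variable 'X_i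
   (i : 'I_N) stands for x_{i+1}.  Every element of A lives in some
   {mpoly rat[N]}, and {mpoly rat[N]} embeds into {mpoly rat[N + m]}. *)

Definition embed (n m : nat) (p : {mpoly rat[n]}) : {mpoly rat[n + m]} :=
  mmap (@mpolyC _ _) (fun i : 'I_n => 'X_(lshift m i)) p.

(* The derivation d with d x_{i+1} = x_i (i >= 1) and d x_1 = 0, i.e.
   d = sum_i d(x_i) * d/dx_i, restricted to Q[x_1..x_N] (which it
   preserves); these restrictions are compatible with [embed]. *)
Definition dA (N : nat) (p : {mpoly rat[N]}) : {mpoly rat[N]} :=
  \sum_(i < N) \sum_(j < N | j.+1 == i :> nat) mderiv i p * 'X_j.

(* Grading deg x_{i+1} = i+1: the library's weight measure
   mnmwgt m = sum_i m_i * (i+1).  [wdeg_homog k p] : p is homogeneous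
   of degree k for this grading. *)
Definition wdeg_homog (N k : nat) (p : {mpoly rat[N]}) : bool :=
  p \is ishomog1 k (Measure.clone _ (@mnmwgt N) _).

From HB Require Import structures.
From mathcomp Require Import all_boot all_order all_algebra.
From mathcomp Require Import multinomials.mpoly.
From mathcomp Require Import zify.
Set Implicit Arguments.
Unset Strict Implicit.
Unset Printing Implicit Defensive.
Local Open Scope ring_scope.
Import GRing.Theory.

(* d lowers the weight by one and kills constants, so d^(w+1) vanishes in
   weight w.  If d^t u = 0 then x_j u = d(x_(j+1) u) - x_(j+1) d u with
   d^(t-1) (d u) = 0, so by induction on t every such x_j u is in the image
   of d as soon as x_(j+t) is available.  A monomial of positive weight w is
   x_i u with u of weight w - i, hence lies in the image of d once the
   variables x_1, ..., x_(w+1) are present. *)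

Lemma additive_image_sum (U V : nmodType) (f : {additive U -> V})
    (I : eqType) (s : seq I) (F : I -> V) :
  {in s, forall i, exists u, f u = F i} -> exists u, f u = \sum_(i <- s) F i.
Proof.
elim: s => [|i s IHs] imF; first by exists 0; rewrite big_nil raddf0.
have [u fu] := imF i (mem_head i s).
have [v fv] : exists v, f v = \sum_(j <- s) F j.
  by apply: IHs => j sj; apply: imF; rewrite inE sj orbT.
by exists (u + v); rewrite big_cons raddfD fu fv.
Qed.

Lemma mnmwgt_eq0 n (mm : 'X_{1..n}) : (mnmwgt mm == 0%N) = (mm == 0%MM).
Proof.
apply/idP/eqP => [|->]; last by rewrite mnmwgt0.
by rewrite -leqn0 => /(leq_trans (leq_mdeg_mnmwgt mm)); rewrite leqn0 mdeg_eq0 => /eqP.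
Qed.

Lemma mnmwgt_subU n (mm : 'X_{1..n}) (i : 'I_n) :
  mm i != 0%N -> mnmwgt mm = (mnmwgt (mm - U_(i))%MM + i.+1)%N.
Proof. by move=> mi; rewrite -mnmwgt1 -mnmwgtD submK // lep1mP. Qed.

Lemma mpolyX_subU (R : comNzRingType) n (mm : 'X_{1..n}) (i : 'I_n) :
  mm i != 0%N -> 'X_[mm] = 'X_i * 'X_[mm - U_(i)] :> {mpoly R[n]}.
Proof. by move=> mi; rewrite -mpolyXD addmC submK // lep1mP. Qed.

Lemma dA_is_linear N : linear (@dA N).
Proof.
move=> c u v; rewrite /dA scaler_sumr -big_split; apply: eq_bigr => i _ /=.
rewrite scaler_sumr -big_split; apply: eq_bigr => j _ /=.
by rewrite linearP mulrDl scalerAl.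
Qed.

HB.instance Definition _ N :=
  GRing.isLinear.Build rat {mpoly rat[N]} {mpoly rat[N]} _ (@dA N) (@dA_is_linear N).

Section Derivation.

Variable N : nat.
Implicit Types (u v : {mpoly rat[N]}) (mm : 'X_{1..N}).

Lemma dA_mul u v : dA (u * v) = dA u * v + u * dA v.
Proof.
rewrite /dA mulr_suml mulr_sumr -big_split; apply: eq_bigr => i _ /=.
rewrite mulr_suml mulr_sumr -big_split; apply: eq_bigr => j _ /=.
by rewrite mderivM mulrDl mulrAC mulrA.
Qed.

Lemma dAC c : dA (c%:MP : {mpoly rat[N]}) = 0.
Proof. by apply: big1 => i _; apply: big1 => j _; rewrite mderivC mul0r. Qed.

Lemma dA_X_succ (i j : 'I_N) : i = j.+1 :> nat -> dA 'X_i = 'X_j.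
Proof.
move=> ij; rewrite /dA (bigD1 i) //= [X in _ + X]big1 ?addr0 => [|k ki].
  rewrite mderivX mnm1E eqxx -{1}[U_(i)%MM]add0m addmK mpolyX0 scale1r.
  by rewrite (big_pred1 j) ?mul1r // => l /=; rewrite ij eqSS.
by apply: big1 => l _; rewrite mderivX mnm1E eq_sym (negbTE ki) scale0r mul0r.
Qed.

Lemma dA_mpolyX_homog mm : wdeg_homog (mnmwgt mm).-1 (dA 'X_[mm]).
Proof.
apply: rpred_sum => i _; apply: rpred_sum => j /eqP ij.
rewrite mderivX; have [->|mi] := eqVneq (mm i) 0%N; first by rewrite scale0r mul0r rpred0.
rewrite -scalerAl rpredZ // -mpolyXD dhomogX /= mnmwgtD mnmwgt1 (mnmwgt_subU mi) -ij.
by apply/eqP; lia.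
Qed.

Lemma dA_homog w u : wdeg_homog w u -> wdeg_homog w.-1 (dA u).
Proof.
move=> /dhomogP homu; rewrite (mpolyE u) linear_sum big_seq.
apply: rpred_sum => mm /homu wm; rewrite linearZ rpredZ //= -wm.
exact: dA_mpolyX_homog.
Qed.

Lemma dA_homog0 u : wdeg_homog 0 u -> dA u = 0.
Proof.
move=> /dhomogP homu; rewrite (mpolyE u) linear_sum big1_seq // => mm /andP[_ /homu].
by move/eqP; rewrite mnmwgt_eq0 => /eqP->; rewrite mpolyX0 -mpolyC1 linearZ /= dAC scaler0.
Qed.

Lemma iter_dA_homog w u : wdeg_homog w u -> iter w.+1 (@dA N) u = 0.
Proof.
elim: w u => [|w IHw] u homu; first exact: dA_homog0.
by rewrite iterSr; apply/IHw/(dA_homog homu).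
Qed.

Lemma mulX_in_image t u (j : 'I_N) :
  iter t (@dA N) u = 0 -> (j + t < N)%N -> exists v, dA v = 'X_j * u.
Proof.
elim: t u j => [|t IHt] u j /= dtu jtN; first by exists 0; rewrite dtu mulr0 raddf0.
have j1N : (j.+1 < N)%N by lia.
have [v dv] : exists v, dA v = 'X_(Ordinal j1N) * dA u.
  by apply: IHt; [rewrite -iterSr | rewrite addSnnS].
exists ('X_(Ordinal j1N) * u - v).
by rewrite raddfB /= dA_mul dv (@dA_X_succ _ j) ?addrK.
Qed.

Lemma homog_in_image w u : (0 < w < N)%N -> wdeg_homog w u -> exists v, dA v = u.
Proof.
move=> /andP[w_gt0 wN] /dhomogP homu; rewrite (mpolyE u).
apply: additive_image_sum => mm /homu wm.
have [i mi] : exists i, mm i != 0%N.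
  apply/existsP; rewrite -negb_forall; apply: contraTN w_gt0 => /forallP m0.
  suff mm0 : mm = 0%MM by rewrite -wm mm0 /= mnmwgt0.
  by apply/mnmP => k; rewrite mnm0E; apply/eqP/m0.
have homX : wdeg_homog (mnmwgt (mm - U_(i))%MM) 'X_[mm - U_(i)].
  by rewrite /wdeg_homog dhomogX.
have wi : (i + (mnmwgt (mm - U_(i))).+1 < N)%N.
  by move: wm; rewrite /= (mnmwgt_subU mi); lia.
have [v dv] := mulX_in_image (iter_dA_homog homX) wi.
by exists (u@_mm *: v); rewrite /= linearZ /= dv -mpolyX_subU.
Qed.

End Derivation.

Lemma embed_mpolyX_homog n m (mm : 'X_{1..n}) : wdeg_homog (mnmwgt mm) (embed m 'X_[mm]).
Proof.
rewrite /embed mmapX /mmap1 /mnmwgt.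
apply: (big_rec2 (fun k (q : {mpoly rat[n + m]}) => wdeg_homog k q)); first exact: dhomog1.
move=> i k q _ homq; rewrite mulnC; apply: dhomogM homq.
by apply: dhomogMn; rewrite dhomogX /= mnmwgt1.
Qed.

Lemma embed_homog n m k (p : {mpoly rat[n]}) : wdeg_homog k p -> wdeg_homog k (embed m p).
Proof.
move=> /dhomogP homp; rewrite (mpolyE p) /embed raddf_sum big_seq.
apply: rpred_sum => mm /homp /= wm; rewrite mmapZ mul_mpolyC rpredZ // -wm.
exact: embed_mpolyX_homog.
Qed.

Theorem lemma8p4 (n k : nat) (p : {mpoly rat[n]}) :
  (0 < k)%N -> wdeg_homog k p ->
  exists (m : nat) (q : {mpoly rat[n + m]}), dA q = embed m p.
Proof.
move=> k_gt0 homp; exists k.+1.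
apply: (homog_in_image (w := k)); last exact: embed_homog.
by rewrite k_gt0 addnS ltnS leq_addl.
Qed.
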